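(* Let $N\ge 2$, $M\ge 2$, $d\ge 2$ be integers and let $\{p(\boldsymbol{a}|\boldsymbol{x})\}$ be any $(N+1)$-partite nonsignalling probability distribution in which each party $A^{(k)}$, $k=1,\dots,N+1$, chooses one of $M$ measurements $A^{(k)}_{x_k}$, $x_k\in\{1,\dots,M\}$, each with $d$ outcomes in $\mathbb{Z}_d=\{0,\dots,d-1\}$. Then $$I^{N,M,d}_{A^{(1)}\cdots A^{(N)}}+\big\langle[A^{(k)}_{x_k}-A^{(N+1)}_{x_{N+1}}]\big\rangle+\big\langle[A^{(N+1)}_{x_{N+1}}-A^{(k)}_{x_k}]\big\rangle\ \ge\ d-1$$ for all $x_k,x_{N+1}\in\{1,\dots,M\}$ and all $k\in\{1,\dots,N\}$, where $I^{N,M,d}_{A^{(1)}\cdots A^{(N)}}$ is the Bell expression (evaluated on the marginal of the first $N$ parties) defined in the context.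
   Context: Notation: $[\Omega]$ denotes $\Omega$ modulo $d$, and $\langle[\Omega]\rangle=\sum_{i=0}^{d-1} i\,P([\Omega]=i)$, computed from the (well-defined by no-signalling) marginal joint distribution of the measurements appearing in $\Omega$. For a party $X$ with observables $X_1,\dots,X_M$, indices beyond $M$ are interpreted by $X_{iM+\gamma}:=[X_\gamma+i]$ (the outcome shifted by $i$ mod $d$), $\gamma\in\{1,\dots,M\}$. The Bell expression is defined recursively. For $N=2$: $I^{2,M,d}_{A^{(1)}A^{(2)}}=\sum_{\alpha=1}^{M}\big(\langle[A^{(1)}_\alpha-A^{(2)}_\alpha]\rangle+\langle[A^{(2)}_\alpha-A^{(1)}_{\alpha+1}]\rangle\big)$. For $N\ge3$: $I^{N,M,d}_{A^{(1)}\cdots A^{(N)}}=\frac1M\sum_{\alpha_{N-1}=1}^{M} I^{N-1,M,d}_{A^{(1)}\cdots A^{(N-1)}}(\alpha_{N-1})\circ A^{(N)}_{\alpha_{N-1}}$, where $I^{N-1,M,d}(\alpha_{N-1})$ is $I^{N-1,M,d}$ with the observable index $\alpha_{N-2}$ of the last party $A^{(N-1)}$ relabelled as $\alpha_{N-2}\to\alpha_{N-2}+\alpha_{N-1}-1$, and ''$\circ A^{(N)}_{\gamma}$'' means inserting $A^{(N)}_{\gamma}$ inside each bracket $\langle[\cdot]\rangle$ with the sign opposite to that of $A^{(N-1)}$ in that bracket. Explicitly, this gives $I^{N,M,d}=\frac{1}{M^{N-2}}\sum_{\alpha_1,\dots,\alpha_{N-1}=1}^{M}\Big(\big\langle[A^{(1)}_{\alpha_1}+S]\big\rangle+\big\langle[-A^{(1)}_{\alpha_1+1}-S]\big\rangle\Big)$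 with $S=\sum_{k=2}^{N-1}(-1)^{k-1}A^{(k)}_{\alpha_{k-1}+\alpha_k-1}+(-1)^{N-1}A^{(N)}_{\alpha_{N-1}}$ (for $N=2$, $S=-A^{(2)}_{\alpha_1}$). Its local (classical) bound is $I^{N,M,d}\ge d-1$ and its minimal nonsignalling value is $0$. Nonsignalling: marginals of any subset of parties are independent of the remaining parties' measurement choices. *)

From HB Require Import structures.
From mathcomp Require Import all_boot all_order all_algebra.
Set Implicit Arguments. Unset Strict Implicit. Unset Printing Implicit Defensive.
Import Order.TTheory GRing.Theory Num.Theory.
Local Open Scope ring_scope.

(* Conventions: n parties indexed by 'I_n; settings 0-based in 'I_M
   (paper's setting alpha in {1..M} is our alpha-1); outcomes in 'I_d.
   A behaviour is p x a = p(a|x). *)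

Definition is_behavior (R : numDomainType) (n M d : nat)
  (p : {ffun 'I_n -> 'I_M} -> {ffun 'I_n -> 'I_d} -> R) : Prop :=
  (forall x a, 0 <= p x a) /\ (forall x, \sum_(a : {ffun 'I_n -> 'I_d}) p x a = 1).

Definition marginal (R : numDomainType) (n M d : nat)
  (p : {ffun 'I_n -> 'I_M} -> {ffun 'I_n -> 'I_d} -> R)
  (S : {set 'I_n}) (x : {ffun 'I_n -> 'I_M}) (aS : {ffun 'I_n -> 'I_d}) : R :=
  \sum_(a : {ffun 'I_n -> 'I_d} | [forall i in S, a i == aS i]) p x a.

Definition nonsignalling (R : numDomainType) (n M d : nat)
  (p : {ffun 'I_n -> 'I_M} -> {ffun 'I_n -> 'I_d} -> R) : Prop :=
  forall (S : {set 'I_n}) (x x' : {ffun 'I_n -> 'I_M}) (aS : {ffun 'I_n -> 'I_d}),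
    (forall i, i \in S -> x i = x' i) -> marginal p S x aS = marginal p S x' aS.

(* A bracket Omega is a list of signed measurements (party, index j, sign),
   where the 0-based index j may exceed M-1: observable number j (0-based)
   is setting (j mod M) with outcome shifted by (j div M), i.e. the paper's
   X_{iM+gamma} := [X_gamma + i]. *)
Definition setd (M : nat) (u0 : 'I_M) (j : nat) : 'I_M := insubd u0 (j %% M)%N.

(* full setting vector: parties in Omega use their settings, other parties
   use the settings of x (irrelevant by nonsignalling) *)
Definition tsetting (n M : nat) (x : {ffun 'I_n -> 'I_M}) (t : seq ('I_n * nat * int))
  : {ffun 'I_n -> 'I_M} :=
  [ffun i => foldr (fun e u => if e.1.1 == i then setd u e.1.2 else u) (x i) t].

Definition tval (n M d : nat) (a : {ffun 'I_n -> 'I_d}) (t : seq ('I_n * nat * int)) : int :=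
  \sum_(e <- t) e.2 * ((nat_of_ord (a e.1.1) + e.1.2 %/ M)%N)%:Z.

Definition bexp (R : numDomainType) (n M d : nat)
  (p : {ffun 'I_n -> 'I_M} -> {ffun 'I_n -> 'I_d} -> R)
  (x : {ffun 'I_n -> 'I_M}) (t : seq ('I_n * nat * int)) : R :=
  \sum_(a : {ffun 'I_n -> 'I_d})
     p (tsetting x t) a * ((intdiv.modz (tval M a t) (d%:Z)))%:~R.

(* alpha_{j+1} (0-based value) from a tuple of N-1 settings *)
Definition av (N M : nat) (al : (N.-1).-tuple 'I_M) (j : nat) : nat :=
  nth 0%N [seq nat_of_ord i | i <- al] j.

(* S = sum_{k=2}^{N-1} (-1)^{k-1} A^(k)_{alpha_{k-1}+alpha_k-1}
       + (-1)^{N-1} A^(N)_{alpha_{N-1}}  ; party k is inord (k-1). *)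
Definition Sterm (N M : nat) (al : (N.-1).-tuple 'I_M) : seq ('I_N.+1 * nat * int) :=
  [seq ((inord k.-1 : 'I_N.+1), (av al (k - 2) + av al k.-1)%N, (-1) ^+ k.-1)
     | k <- iota 2 (N - 2)]
  ++ [:: ((inord N.-1 : 'I_N.+1), av al (N - 2), (-1) ^+ N.-1)].

(* [A^(1)_{alpha_1} + S] *)
Definition bra1 (N M : nat) (al : (N.-1).-tuple 'I_M) : seq ('I_N.+1 * nat * int) :=
  ((inord 0 : 'I_N.+1), av al 0, 1) :: Sterm al.

(* [-A^(1)_{alpha_1+1} - S] *)
Definition bra2 (N M : nat) (al : (N.-1).-tuple 'I_M) : seq ('I_N.+1 * nat * int) :=
  ((inord 0 : 'I_N.+1), (av al 0).+1, -1) :: [seq (e.1, - e.2) | e <- Sterm al].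

(* I^{N,M,d}_{A^(1)...A^(N)} evaluated on the first N parties of an
   (N+1)-partite behaviour (party N+1 = ord_max keeps setting x ord_max). *)
Definition bellI (R : numFieldType) (N M d : nat)
  (p : {ffun 'I_N.+1 -> 'I_M} -> {ffun 'I_N.+1 -> 'I_d} -> R)
  (x : {ffun 'I_N.+1 -> 'I_M}) : R :=
  ((M%:R : R) ^+ (N - 2))^-1 *
  \sum_(al : (N.-1).-tuple 'I_M) (bexp p x (bra1 al) + bexp p x (bra2 al)).

From Pilot Require Import Defs.
From mathcomp Require Import all_boot all_order all_algebra ring zify.
Import Order.TTheory GRing.Theory Num.Theory intdiv.
Set Implicit Arguments. Unset Strict Implicit. Unset Printing Implicit Defensive.
Local Open Scope ring_scope.

(* Each term of I^{N,M,d} is a pair of brackets [A^(1)_{a_1} + S] and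
   [-A^(1)_{a_1+1} - S], i.e. signed chains through the first N parties.
   Pairing the first bracket of a setting tuple with the second bracket of a
   suitably shifted one, the two chains differ only in the observable of party
   k, whose index moves by one; by the triangle inequality for residues mod d
   and nonsignalling, the pair dominates the difference of the links
   <[+-A^(k)_J - A^(N+1)]> at J and J +- 1.  Averaging over the settings makes
   J equidistributed mod M, so I^{N,M,d} dominates a telescoping sum over a
   full period of J; the wrap-around X_{J+M} = [X_J + 1] leaves
   <d [A^(k) = A^(N+1)] - 1>.  The two brackets between A^(k) and A^(N+1) add
   up to <d [A^(k) <> A^(N+1)]>, and the sum is d - 1. *)

Section Residues.
Variable D : int.
Hypothesis D_gt0 : 0 < D.

Lemma modz_divzE (z : int) : (z %% D)%Z = z - (z %/ D)%Z * D.
Proof. by apply/eqP; rewrite eq_sym subr_eq addrC -divz_eq. Qed.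

Lemma modz_dvd_small (z w : int) : 0 <= w < D -> (D %| z - w)%Z -> (z %% D)%Z = w.
Proof.
move=> hw hdv; have : (z == w %[mod D])%Z by rewrite eqz_mod_dvd.
by move/eqP => ->; rewrite modz_small.
Qed.

Lemma modzD_le (u v : int) : ((u + v) %% D)%Z <= (u %% D)%Z + (v %% D)%Z.
Proof.
have D_neq0 : D != 0 by rewrite gt_eqF.
rewrite -modzDm; set y := _ + _.
have y_ge0 : 0 <= y by rewrite addr_ge0 ?modz_ge0.
rewrite [X in _ <= X](divz_eq y D) lerDr.
by rewrite mulr_ge0 ?divz_ge0 // ltW.
Qed.

Lemma modz_modzN (z : int) :
  (z %% D)%Z + ((- z) %% D)%Z = if (D %| z)%Z then 0 else D.
Proof.
have D_neq0 : D != 0 by rewrite gt_eqF.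
case: ifP => Dz.
  by move/dvdz_mod0P: (Dz) => ->; rewrite add0r; apply/dvdz_mod0P; rewrite -mulN1r dvdz_mull.
have zD_gt0 : 0 < (z %% D)%Z.
  by rewrite lt0r modz_ge0 // andbT; apply: contraFN Dz => /eqP/dvdz_mod0P.
rewrite (@modz_dvd_small (- z) (D - (z %% D)%Z)); first by rewrite addrC subrK.
  by rewrite subr_ge0 ltW ?ltz_pmod //= ltrBlDr ltrDl.
have -> : - z - (D - (z %% D)%Z) = - ((z %/ D)%Z + 1) * D.
  by rewrite {1}(divz_eq z D); ring.
by rewrite dvdz_mull.
Qed.

Lemma modzB1_sub (z : int) :
  ((z - 1) %% D)%Z - (z %% D)%Z = (if (D %| z)%Z then D else 0) - 1.
Proof.
have D_neq0 : D != 0 by rewrite gt_eqF.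
case: ifP => Dz.
  move/dvdz_mod0P: (Dz) => ->; rewrite subr0.
  apply: modz_dvd_small; first by apply/andP; split; lia.
  have -> : z - 1 - (D - 1) = z + (-1) * D by ring.
  by rewrite rpredD // dvdz_mull.
have zD_gt0 : 0 < (z %% D)%Z.
  by rewrite lt0r modz_ge0 // andbT; apply: contraFN Dz => /eqP/dvdz_mod0P.
have zD_ltD := ltz_pmod z D_gt0.
rewrite (@modz_dvd_small (z - 1) ((z %% D)%Z - 1)); first by rewrite add0r; ring.
  by apply/andP; split; lia.
have -> : z - 1 - ((z %% D)%Z - 1) = (z %/ D)%Z * D by rewrite {1}(divz_eq z D); ring.
by rewrite dvdz_mull.
Qed.

End Residues.

Lemma sum_alt_adjacent (R : comPzRingType) (n : nat) (q : nat -> R) :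
  \sum_(m < n) (-1) ^+ m * (q m + q m.+1) = q 0%N - (-1) ^+ n * q n.
Proof.
elim: n => [|n IH]; first by rewrite big_ord0 expr0 mul1r subrr.
by rewrite big_ord_recr /= IH exprS; ring.
Qed.

Section CyclicShift.
Variable M : nat.
Hypothesis M_gt0 : (0 < M)%N.

Definition addmod (a r : nat) : 'I_M := Ordinal (ltn_pmod (a + r) M_gt0).

Lemma addmod_inj (a b r : nat) : (a < M)%N -> (b < M)%N -> addmod a r = addmod b r -> a = b.
Proof.
move=> aM bM /(congr1 val) /= /eqP.
by rewrite eqn_modDr !modn_small // => /eqP.
Qed.

Lemma sum_rotate (V : zmodType) (F : nat -> V) (c : nat) :
  \sum_(r < M) F ((c + r) %% M)%N = \sum_(r < M) F r.
Proof.
have inj_shift : injective (fun r : 'I_M => addmod c r).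
  by move=> r s /(congr1 val) /= /eqP; rewrite eqn_modDl !modn_small // => /eqP /val_inj.
by rewrite [RHS](reindex_inj inj_shift).
Qed.

Lemma sum_equidistributed (R : pzRingType) (T : finType) (rho : T -> nat)
    (ta : nat -> T -> T) (F : nat -> R) :
  (forall r, injective (ta r)) -> (forall r t, rho (ta r t) = ((rho t + r) %% M)%N) ->
  M%:R * \sum_t F (rho t) = #|T|%:R * \sum_(r < M) F r.
Proof.
move=> ta_inj rho_ta.
have -> : M%:R * \sum_t F (rho t) = \sum_(r < M) \sum_t F (rho (ta r t)).
  rewrite mulr_natl -[X in _ *+ X](card_ord M) -sumr_const.
  by apply: eq_bigr => r _; rewrite (reindex_inj (ta_inj r)).
rewrite exchange_big mulr_natl -sumr_const.
by apply: eq_bigr => t _; rewrite -(sum_rotate F (rho t)); apply: eq_bigr => r _; rewrite rho_ta.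
Qed.

End CyclicShift.

Section Expectation.
Variables (R : numDomainType) (n M d : nat).
Variable p : {ffun 'I_n -> 'I_M} -> {ffun 'I_n -> 'I_d} -> R.

Definition expect (y : {ffun 'I_n -> 'I_M}) (f : {ffun 'I_n -> 'I_d} -> int) : R :=
  \sum_a p y a * (f a)%:~R.

Lemma eq_expect y f g : f =1 g -> expect y f = expect y g.
Proof. by move=> fg; apply: eq_bigr => a _; rewrite fg. Qed.

Lemma expectD y f g : expect y (fun a => f a + g a) = expect y f + expect y g.
Proof. by rewrite /expect -big_split; apply: eq_bigr => a _; rewrite rmorphD mulrDr. Qed.

Lemma expectB y f g : expect y (fun a => f a - g a) = expect y f - expect y g.
Proof. by rewrite /expect -sumrB; apply: eq_bigr => a _; rewrite rmorphB mulrBr. Qed.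

Lemma bexpE x t :
  bexp p x t = expect (tsetting x t) (fun a => (Defs.tval M a t %% d%:Z)%Z).
Proof. by []. Qed.

Hypothesis p_behavior : is_behavior p.

Lemma expect_ge0 y f : (forall a, 0 <= f a) -> 0 <= expect y f.
Proof.
move=> f_ge0; apply: sumr_ge0 => a _; apply: mulr_ge0; first by case: p_behavior.
by rewrite ler0z.
Qed.

Lemma ler_expect y f g : (forall a, f a <= g a) -> expect y f <= expect y g.
Proof. by move=> fg; rewrite -subr_ge0 -expectB; apply: expect_ge0 => a; rewrite subr_ge0. Qed.

Lemma expect_cst y (c : int) : expect y (fun _ => c) = c%:~R.
Proof. by rewrite /expect -mulr_suml; case: p_behavior => _ ->; rewrite mul1r. Qed.

Section Marginal.
Variable S : {set 'I_n}.
Hypothesis d_gt0 : (0 < d)%N.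

Let proj (a : {ffun 'I_n -> 'I_d}) : {ffun 'I_n -> 'I_d} :=
  [ffun i => if i \in S then a i else Ordinal d_gt0].

Lemma expect_marginal y (f : {ffun 'I_n -> 'I_d} -> int) :
  (forall a a' : {ffun 'I_n -> 'I_d}, (forall i, i \in S -> a i = a' i) -> f a = f a') ->
  expect y f = \sum_b (f b)%:~R * (if proj b == b then marginal p S y b else 0).
Proof.
move=> f_S.
have f_proj a : f (proj a) = f a by apply: f_S => i iS; rewrite ffunE iS.
have proj_id a : proj (proj a) = proj a.
  by apply/ffunP => i; rewrite !ffunE; case: (i \in S) => //; rewrite ffunE.
transitivity (\sum_a \sum_b (if proj a == b then p y a * (f b)%:~R else 0)).
  by apply: eq_bigr => a _; rewrite -big_mkcond /= (big_pred1 (proj a)) ?f_proj.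
rewrite exchange_big; apply: eq_bigr => b _.
rewrite -big_mkcond /= -mulr_suml mulrC; congr (_ * _).
case: eqP => [b_proj|b_nproj].
  rewrite /marginal; apply: eq_bigl => a; apply/eqP/forall_inP.
    by move=> <- i iS; rewrite ffunE iS.
  move=> ab; apply/ffunP => i; rewrite ffunE; case: ifP => iS; first exact/eqP/ab.
  by rewrite -b_proj ffunE iS.
rewrite big_pred0 // => a; apply/negP => /eqP ab; apply: b_nproj.
by rewrite -ab proj_id.
Qed.

Hypothesis p_nonsignalling : nonsignalling p.

Lemma expect_nonsignalling (y y' : {ffun 'I_n -> 'I_M}) (f : {ffun 'I_n -> 'I_d} -> int) :
  (forall i, i \in S -> y i = y' i) ->
  (forall a a' : {ffun 'I_n -> 'I_d}, (forall i, i \in S -> a i = a' i) -> f a = f a') ->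
  expect y f = expect y' f.
Proof.
move=> yy' f_S; rewrite !(expect_marginal _ f_S).
by apply: eq_bigr => b _; case: ifP => // _; congr (_ * _); exact: p_nonsignalling.
Qed.

End Marginal.
End Expectation.

Section Bell.
Variables (R : realFieldType) (N M d : nat).
Variable p : {ffun 'I_N.+1 -> 'I_M} -> {ffun 'I_N.+1 -> 'I_d} -> R.
Hypotheses (N_ge2 : (2 <= N)%N) (M_ge2 : (2 <= M)%N) (d_ge2 : (2 <= d)%N).
Hypotheses (p_behavior : is_behavior p) (p_nonsignalling : nonsignalling p).
Variable x : {ffun 'I_N.+1 -> 'I_M}.

Let N_gt0 : (0 < N)%N. Proof. exact: leq_trans N_ge2. Qed.
Let M_gt0 : (0 < M)%N. Proof. exact: leq_trans M_ge2. Qed.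
Let d_gt0 : (0 < d)%N. Proof. exact: leq_trans d_ge2. Qed.
Let M_gt0z : 0 < M%:Z. Proof. by rewrite ltz_nat. Qed.
Let M_neq0z : M%:Z != 0. Proof. by rewrite gt_eqF. Qed.
Let d_gt0z : 0 < d%:Z. Proof. by rewrite ltz_nat. Qed.

Definition modd (z : int) : int := (z %% d%:Z)%Z.

Definition setting_of (J : int) : 'I_M := insubd (Ordinal M_gt0) `|(J %% M%:Z)%Z|%N.

Lemma setting_ofE J : val (setting_of J) = `|(J %% M%:Z)%Z|%N.
Proof.
rewrite val_insubd; case: ifP => // /negP []; rewrite -ltz_nat abszE.
by rewrite ger0_norm ?ltz_pmod ?modz_ge0.
Qed.

Lemma setting_ofMD q J : setting_of (q * M%:Z + J) = setting_of J.
Proof. by rewrite /setting_of modzMDl. Qed.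

Definition adj (b : nat -> int) (m : nat) : int := b m + b m.+1.

Definition chain_setting (g : nat -> int) : {ffun 'I_N.+1 -> 'I_M} :=
  [ffun i : 'I_N.+1 => if (i < N)%N then setting_of (g i) else x i].

Definition chain_value (g : nat -> int) (a : {ffun 'I_N.+1 -> 'I_d}) : int :=
  \sum_(m < N) (-1) ^+ m * ((a (inord m) : nat)%:Z + (g m %/ M%:Z)%Z).

(* The bracket <[s (A^(1)_{b_0+b_1} - A^(2)_{b_1+b_2} + ... )]> on the first
   [N] parties, with the wrapped observables X_{iM+j} = [X_j + i]. *)
Definition chain (s : int) (b : nat -> int) : R :=
  expect p (chain_setting (adj b)) (fun a => modd (s * chain_value (adj b) a)).

Definition link_setting (k : nat) (J : int) : {ffun 'I_N.+1 -> 'I_M} :=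
  [ffun i : 'I_N.+1 => if i == inord k then setting_of J else x i].

(* The bracket <[(-1)^k A^(k+1)_J - cf(A^(N+1))]> between party [k] and the
   last party. *)
Definition link (k : nat) (cf : int -> int) (J : int) : R :=
  expect p (link_setting k J)
    (fun a => modd ((-1) ^+ k * ((a (inord k) : nat)%:Z + (J %/ M%:Z)%Z)
                    - cf (a ord_max : nat)%:Z)).

Lemma link_sub_le_chains (k : nat) (b b' : nat -> int) (cf : int -> int) :
  (k < N)%N -> (forall m, (m < N)%N -> m != k -> adj b' m = adj b m) ->
  link k cf (adj b k) - link k cf (adj b' k) <= chain 1 b + chain (-1) b'.
Proof.
move=> kN bb'.
set ko : 'I_N := Ordinal kN.
have kN1 : (k < N.+1)%N := ltnW kN.
pose term (g : nat -> int) (a : {ffun 'I_N.+1 -> 'I_d}) (m : 'I_N) : int :=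
  (-1) ^+ m * ((a (inord m) : nat)%:Z + (g m %/ M%:Z)%Z).
pose rest (g : nat -> int) a := \sum_(m < N | m != ko) term g a m.
have chain_valueE g a : chain_value g a = term g a ko + rest g a.
  by rewrite /chain_value (bigD1 ko).
have rest_b' a : rest (adj b') a = rest (adj b) a.
  by apply: eq_bigr => m mk; rewrite /term bb'.
have k_neq_last : inord k != ord_max :> 'I_N.+1.
  by apply/eqP => /(congr1 val); rewrite /= inordK // => kE; have := kN; rewrite kE ltnn.
have inord_kP (i : 'I_N) : (inord i == inord k :> 'I_N.+1) = (i == ko).
  have iN1 : (i < N.+1)%N := ltnW (ltn_ord i).
  by rewrite -(inj_eq val_inj) /= !inordK.
pose last (a : {ffun 'I_N.+1 -> 'I_d}) := cf (a ord_max : nat)%:Z.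
have linkE g : link k cf (g k) = expect p (chain_setting g) (fun a => modd (term g a ko - last a)).
  apply: (expect_nonsignalling (S := [set inord k; ord_max]) d_gt0 p_nonsignalling).
    move=> i; rewrite !inE => /orP [] /eqP ->; rewrite !ffunE ?eqxx.
      by rewrite inordK // kN.
    by rewrite eq_sym (negbTE k_neq_last) ltnn.
  by move=> a a' aa'; rewrite /last !aa' // !inE eqxx ?orbT.
pose mid a := modd (- rest (adj b) a - last a).
have mid_nonsignalling : expect p (chain_setting (adj b)) mid = expect p (chain_setting (adj b')) mid.
  apply: (expect_nonsignalling (S := [set i | i != inord k :> 'I_N.+1]) d_gt0 p_nonsignalling).
    move=> i; rewrite inE => ik; rewrite !ffunE; case: ifP => // iN.
    by rewrite bb' //; apply: contra ik => /eqP ik; rewrite -ik -(inj_eq val_inj) /= inordK.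
  move=> a a' aa'; rewrite /mid /last aa'; last by rewrite inE eq_sym.
  congr (modd (- _ - _)).
  by apply: eq_bigr => m mk; rewrite /term aa' // inE inord_kP.
rewrite (linkE (adj b)) (linkE (adj b')) /chain.
have le1 : expect p (chain_setting (adj b)) (fun a => modd (term (adj b) a ko - last a))
    - expect p (chain_setting (adj b)) mid
    <= expect p (chain_setting (adj b)) (fun a => modd (1 * chain_value (adj b) a)).
  rewrite -expectB; apply: ler_expect => // a; rewrite mul1r chain_valueE lerBlDr.
  have -> : term (adj b) a ko - last a
    = (term (adj b) a ko + rest (adj b) a) + (- rest (adj b) a - last a) by ring.
  exact: modzD_le.
have le2 : expect p (chain_setting (adj b')) mid
    - expect p (chain_setting (adj b')) (fun a => modd (term (adj b') a ko - last a))
    <= expect p (chain_setting (adj b')) (fun a => modd (-1 * chain_value (adj b') a)).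
  rewrite -expectB; apply: ler_expect => // a; rewrite /mid mulN1r chain_valueE rest_b' lerBlDr.
  have -> : - rest (adj b) a - last a
    = (- (term (adj b') a ko + rest (adj b) a)) + (term (adj b') a ko - last a) by ring.
  exact: modzD_le.
by apply: le_trans (lerD le1 le2); rewrite mid_nonsignalling addrA subrK.
Qed.

Lemma chain_wrap (s : int) (b b' : nat -> int) :
  b' 0%N = b 0%N -> b' N = b N -> (forall j, (M%:Z %| b' j - b j)%Z) ->
  chain s b' = chain s b.
Proof.
move=> bb'0 bb'N M_dvd.
pose q j := ((b' j - b j) %/ M%:Z)%Z.
have b'E j : b' j = b j + q j * M%:Z by rewrite /q divzK // addrC subrK.
have adj_b' m : adj b' m = (q m + q m.+1) * M%:Z + adj b m by rewrite /adj !b'E; ring.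
rewrite /chain.
have -> : chain_setting (adj b') = chain_setting (adj b).
  by apply/ffunP => i; rewrite !ffunE adj_b' setting_ofMD.
apply: eq_expect => a; congr (modd (s * _)).
rewrite /chain_value.
have -> : \sum_(m < N) (-1) ^+ m * ((a (inord m) : nat)%:Z + (adj b' m %/ M%:Z)%Z)
    = \sum_(m < N) ((-1) ^+ m * ((a (inord m) : nat)%:Z + (adj b m %/ M%:Z)%Z)
                    + (-1) ^+ m * (q m + q m.+1)).
  by apply: eq_bigr => m _; rewrite adj_b' divzMDl //; ring.
rewrite big_split /= sum_alt_adjacent.
by rewrite /q bb'0 bb'N !subrr !div0z mulr0 subrr addr0.
Qed.

Definition bracket_list (G : nat -> nat) (S : nat -> int) : seq ('I_N.+1 * nat * int) :=
  [seq ((inord m : 'I_N.+1), G m, S m) | m <- iota 0 N].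

Lemma foldr_bracket_list (G : nat -> nat) (S : nat -> int) (i : 'I_N.+1) m n :
  (m + n <= N)%N ->
  val (foldr (fun e u => if e.1.1 == i then setd u e.1.2 else u) (x i)
        [seq ((inord j : 'I_N.+1), G j, S j) | j <- iota m n])
  = if (m <= i < m + n)%N then (G i %% M)%N else val (x i).
Proof.
elim: n m => [|n IH] m mnN.
  by rewrite addn0; case: leqP => // /leq_trans h; rewrite ltnNge h.
have mN : (m < N.+1)%N by rewrite ltnS (leq_trans _ mnN) ?leq_addr.
rewrite /=; case: (eqVneq (inord m : 'I_N.+1) i) => [<-|m_neq_i].
  by rewrite /setd val_insubd ltn_pmod // inordK // leqnn -addSnnS leq_addr.
rewrite IH ?addSnnS // [(m <= i)%N]leq_eqVlt.
suff -> : (m == i) = false by [].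
by apply/negbTE; apply: contra m_neq_i => /eqP mi; apply/eqP/val_inj; rewrite /= inordK // mi.
Qed.

Lemma tsetting_bracket_list G S :
  tsetting x (bracket_list G S) = chain_setting (fun m => (G m)%:Z).
Proof.
apply/ffunP => i; apply: val_inj; rewrite !ffunE foldr_bracket_list ?add0n //=.
by case: ifP => // _; rewrite setting_ofE modz_nat absz_nat.
Qed.

Lemma tval_bracket_list (a : {ffun 'I_N.+1 -> 'I_d}) G S :
  Defs.tval M a (bracket_list G S)
  = \sum_(m < N) S m * ((a (inord m) : nat)%:Z + ((G m)%:Z %/ M%:Z)%Z).
Proof.
rewrite /Defs.tval big_map -{1}(subn0 N) -/(index_iota 0 N) big_mkord.
by apply: eq_bigr => m _ /=; rewrite PoszD divz_nat.
Qed.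

Lemma bexp_bracket_list (s : int) (G : nat -> nat) (b : nat -> int) :
  (forall m, adj b m = (G m)%:Z) ->
  bexp p x (bracket_list G (fun m => s * (-1) ^+ m)) = chain s b.
Proof.
move=> bG; rewrite bexpE tsetting_bracket_list /chain.
have -> : chain_setting (adj b) = chain_setting (fun m => (G m)%:Z).
  by apply/ffunP => i; rewrite !ffunE bG.
apply: eq_expect => a; rewrite tval_bracket_list /chain_value mulr_sumr.
by congr modd; apply: eq_bigr => m _; rewrite bG mulrA.
Qed.

Definition bseq (z : nat) (al : (N.-1).-tuple 'I_M) (m : nat) : nat :=
  if m is m'.+1 then av al m' else z.

Definition bseqz z al (m : nat) : int := (bseq z al m)%:Z.

Lemma av_out (al : (N.-1).-tuple 'I_M) j : (N.-1 <= j)%N -> av al j = 0%N.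
Proof. by move=> j_ge; rewrite /av nth_default // size_map size_tuple. Qed.

Lemma av_in (al : (N.-1).-tuple 'I_M) j (j_lt : (j < N.-1)%N) :
  av al j = tnth al (Ordinal j_lt).
Proof. by rewrite /av (nth_map (Ordinal M_gt0)) ?size_tuple // (tnth_nth (Ordinal M_gt0)). Qed.

Lemma iota0_first_last n : (2 <= n)%N -> iota 0 n = 0%N :: iota 1 (n - 2) ++ [:: n.-1].
Proof.
case: n => [|[|n]] // _; rewrite !subSS subn0 -[n.+1]addn1 /= iotaD add1n addn1.
by [].
Qed.

Lemma Sterm_bseq z (al : (N.-1).-tuple 'I_M) :
  Sterm al = [seq ((inord m : 'I_N.+1), (bseq z al m + bseq z al m.+1)%N, (-1) ^+ m)
               | m <- iota 1 (N - 2) ++ [:: N.-1]].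
Proof.
rewrite /Sterm map_cat; congr (_ ++ _).
  rewrite (iotaDl 1 1) -map_comp; apply/eq_in_map => m; rewrite mem_iota => /andP [m_gt0 _] /=.
  by case: m m_gt0 => // m _; rewrite add1n /= !subSS subn0.
have N1E : N.-1 = (N - 2).+1 by lia.
congr [:: (_, _, _)].
have -> : bseq z al N.-1 = av al (N - 2) by rewrite N1E.
have -> : bseq z al N.-1.+1 = 0%N by rewrite prednK //= -{1}(prednK N_gt0) /= av_out.
by rewrite addn0.
Qed.

Lemma bexp_bra1 al : bexp p x (bra1 al) = chain 1 (bseqz 0 al).
Proof.
rewrite -(@bexp_bracket_list 1 (fun m => bseq 0 al m + bseq 0 al m.+1)%N); last first.
  by move=> m; rewrite /adj /bseqz PoszD.
rewrite /bra1 (Sterm_bseq 0) /bracket_list (iota0_first_last N_ge2) map_cons.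
by congr (bexp _ _ (_ :: _)); apply: eq_map => m; rewrite mul1r.
Qed.

Lemma bexp_bra2 al : bexp p x (bra2 al) = chain (-1) (bseqz 1 al).
Proof.
rewrite -(@bexp_bracket_list (-1) (fun m => bseq 1 al m + bseq 1 al m.+1)%N); last first.
  by move=> m; rewrite /adj /bseqz PoszD.
rewrite /bra2 (Sterm_bseq 1) /bracket_list (iota0_first_last N_ge2) map_cons -map_comp.
by congr (bexp _ _ (_ :: _)); apply: eq_map => m /=; rewrite mulN1r.
Qed.

Section Party.
Variable k : nat.
Hypothesis kN : (k < N)%N.

Definition sgk : int := (-1) ^+ k.

Definition link_index (al : (N.-1).-tuple 'I_M) : int := adj (bseqz 0 al) k.

(* Pairing [bra1 al] with [bra2 (shift_prefix al)], the two chains differ only in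
   the observable of party [k], whose index moves by [sgk]. *)
Definition shift_prefix (al : (N.-1).-tuple 'I_M) : (N.-1).-tuple 'I_M :=
  [tuple (if (i < k)%N then addmod M_gt0 (tnth al i) (if odd i then 1%N else M.-1)
          else tnth al i) | i < N.-1].

Lemma shift_prefix_inj : injective shift_prefix.
Proof.
move=> al be /(congr1 (fun t => tnth t _)) ale; apply: eq_from_tnth => i.
move: (ale i); rewrite !tnth_mktuple; case: ifP => // _.
by move/addmod_inj => eq_al; apply/val_inj/eq_al.
Qed.

Lemma av_shift_prefix al j : av (shift_prefix al) j =
  if (j < k)%N then ((av al j + (if odd j then 1%N else M.-1)) %% M)%N else av al j.
Proof.
case: (ltnP j N.-1) => jN; first by rewrite !(av_in _ jN) tnth_mktuple /=; case: ifP.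
by rewrite !av_out //; case: ifP => // jk; lia.
Qed.

Definition bseq_flip (al : (N.-1).-tuple 'I_M) (j : nat) : int :=
  bseqz 0 al j + (if (j <= k)%N then (-1) ^+ j else 0).

Lemma chain_shift_prefix al : chain (-1) (bseqz 1 (shift_prefix al)) = chain (-1) (bseq_flip al).
Proof.
apply: chain_wrap.
- by rewrite /bseq_flip /bseqz /= expr0 add0r.
- rewrite /bseq_flip /bseqz -(prednK N_gt0) /= av_shift_prefix av_out // prednK //.
  by rewrite leqNgt kN /= addr0.
case=> [|i]; first by rewrite /bseq_flip /bseqz /= expr0 add0r subrr dvdz0.
rewrite /bseq_flip /bseqz /= av_shift_prefix.
case: ifP => ik; last by rewrite addr0 subrr dvdz0.
rewrite -modz_nat modz_divzE // -signr_odd PoszD /=.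
set q := (_ %/ _)%Z; case: (odd i) => /=.
- have -> : (av al i)%:Z + 1 - q * M%:Z - ((av al i)%:Z + (-1) ^+ false) = - q * M%:Z.
    by rewrite expr0; ring.
  by rewrite dvdz_mull.
- have M1E : (M.-1)%:Z = M%:Z - 1 by rewrite -subn1 subzn.
  have -> : (av al i)%:Z + (M.-1)%:Z - q * M%:Z - ((av al i)%:Z + (-1) ^+ true)
      = (1 - q) * M%:Z by rewrite M1E expr1; ring.
  by rewrite dvdz_mull.
Qed.

Lemma adj_bseq_flip al m :
  adj (bseq_flip al) m = adj (bseqz 0 al) m + (if m == k then sgk else 0).
Proof.
rewrite /adj /bseq_flip /sgk; case: (ltngtP m k) => mk.
- by rewrite exprS; ring.
- by rewrite !addr0.
- by rewrite mk; ring.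
Qed.

Lemma link_shift (cf : int -> int) (q J : int) :
  link k (fun c => cf c + sgk * q) J = link k cf (J - q * M%:Z).
Proof.
have JE : J - q * M%:Z = (- q) * M%:Z + J by ring.
rewrite /link.
have -> : link_setting k J = link_setting k (J - q * M%:Z).
  by apply/ffunP => i; rewrite !ffunE JE setting_ofMD.
by apply: eq_expect => a; rewrite JE divzMDl // /sgk /modd; congr ((_ %% _)%Z); ring.
Qed.

Lemma link_step_le_bra_pair (cf : int -> int) (x0 : int) al :
  link k cf (x0 + ((link_index al - x0) %% M%:Z)%Z)
  - link k cf (x0 + ((link_index al - x0) %% M%:Z)%Z + sgk)
    <= bexp p x (bra1 al) + bexp p x (bra2 (shift_prefix al)).
Proof.
set r := ((link_index al - x0) %% M%:Z)%Z.
rewrite bexp_bra1 bexp_bra2 chain_shift_prefix.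
set q := ((link_index al - x0) %/ M%:Z)%Z.
have x0rE : x0 + r = link_index al - q * M%:Z by rewrite /r modz_divzE // -/q; ring.
have flip_adj m : (m < N)%N -> m != k -> adj (bseq_flip al) m = adj (bseqz 0 al) m.
  by move=> _ mk; rewrite adj_bseq_flip (negbTE mk) addr0.
have := link_sub_le_chains (fun c => cf c + sgk * q) kN flip_adj.
rewrite adj_bseq_flip eqxx -/(link_index al) !link_shift x0rE.
by have -> : link_index al + sgk - q * M%:Z = link_index al - q * M%:Z + sgk by ring.
Qed.

Definition shift_alpha (r : nat) (al : (N.-1).-tuple 'I_M) : (N.-1).-tuple 'I_M :=
  [tuple (if (i : nat) == k.-1 then addmod M_gt0 (tnth al i) r else tnth al i) | i < N.-1].

Lemma shift_alpha_inj r : injective (shift_alpha r).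
Proof.
move=> al be /(congr1 (fun t => tnth t _)) ale; apply: eq_from_tnth => i.
move: (ale i); rewrite !tnth_mktuple; case: ifP => // _.
by move/addmod_inj => eq_al; apply/val_inj/eq_al.
Qed.

Lemma av_shift_alpha r al j : av (shift_alpha r al) j =
  if j == k.-1 then ((av al j + r) %% M)%N else av al j.
Proof.
case: (ltnP j N.-1) => jN; first by rewrite !(av_in _ jN) tnth_mktuple /=; case: ifP.
by rewrite !av_out //; case: eqP => // jk; lia.
Qed.

Lemma link_index_shift_alpha r al :
  (link_index (shift_alpha r al) = link_index al + r%:Z %[mod M%:Z])%Z.
Proof.
rewrite /link_index /adj /bseqz; have [k0|k_gt0] := posnP k.
  by rewrite k0 /= av_shift_alpha k0 eqxx !add0r -PoszD !modz_nat modn_mod.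
rewrite -(prednK k_gt0) /= !av_shift_alpha eqxx (gtn_eqF (ltnSn _)).
by rewrite -!PoszD !modz_nat modnDml addnAC.
Qed.

Lemma sum_link_steps_le_bell (cf : int -> int) (x0 : int) :
  \sum_(r < M) (link k cf (x0 + (r : nat)%:Z) - link k cf (x0 + (r : nat)%:Z + sgk))
    <= bellI p x.
Proof.
pose step (r : nat) := link k cf (x0 + r%:Z) - link k cf (x0 + r%:Z + sgk).
pose rho al : nat := `|((link_index al - x0) %% M%:Z)%Z|%N.
have rhoE al : (rho al)%:Z = ((link_index al - x0) %% M%:Z)%Z by rewrite gez0_abs ?modz_ge0.
have steps_le_bras : \sum_al step (rho al)
    <= \sum_(al : (N.-1).-tuple 'I_M) (bexp p x (bra1 al) + bexp p x (bra2 al)).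
  rewrite [X in _ <= X]big_split /= [X in _ <= _ + X](reindex_inj shift_prefix_inj) -big_split /=.
  by apply: ler_sum => al _; rewrite /step rhoE; apply: link_step_le_bra_pair.
(* [shift_alpha] makes the index of party [k] equidistributed modulo [M]. *)
have rho_shift r al : rho (shift_alpha r al) = ((rho al + r) %% M)%N.
  apply/eqP; rewrite -eqz_nat rhoE -modz_nat PoszD rhoE modzDml; apply/eqP.
  by rewrite -[LHS]modzDml link_index_shift_alpha modzDml addrAC.
have := sum_equidistributed M_gt0 step shift_alpha_inj rho_shift.
rewrite card_tuple card_ord natrX => equi.
have M_neq0 : (M%:R : R) != 0 by rewrite pnatr_eq0 -lt0n.
have sum_steps : \sum_al step (rho al) = (M%:R ^+ (N - 2)) * \sum_(r < M) step r.
  apply: (mulfI M_neq0); rewrite equi mulrA -exprS.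
  by congr (_ ^+ _ * _); lia.
rewrite /bellI ler_pdivlMl ?exprn_gt0 ?ltr0n // -sum_steps.
exact: steps_le_bras.
Qed.

End Party.

Lemma link_at (k : nat) (cf : int -> int) (t : int) :
  link k cf ((x (inord k) : nat)%:Z + t * M%:Z)
  = expect p x (fun a => modd ((-1) ^+ k * ((a (inord k) : nat)%:Z + t) - cf (a ord_max : nat)%:Z)).
Proof.
rewrite /link.
have -> : link_setting k ((x (inord k) : nat)%:Z + t * M%:Z) = x.
  apply/ffunP => i; rewrite ffunE; case: eqP => [->|] //.
  by apply: val_inj; rewrite setting_ofE addrC modzMDl modz_nat modn_small ?absz_nat.
apply: eq_expect => a; congr (modd (_ * (_ + _) - _)).
by rewrite addrC divzMDl // divz_nat divn_small // addr0.
Qed.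

Lemma sum_link_telescope (k : nat) (cf : int -> int) (x0 : int) :
  \sum_(r < M) (link k cf (x0 + (r : nat)%:Z) - link k cf (x0 + (r : nat)%:Z + 1))
  = link k cf x0 - link k cf (x0 + M%:Z).
Proof.
pose f (n : nat) := link k cf (x0 + n%:Z).
rewrite -[link k cf x0](congr1 (link k cf) (addr0 x0)) -/(f 0%N) -/(f M) -opprB.
rewrite -(telescope_sumr f (leq0n M)) big_mkord -sumrN.
by apply: eq_bigr => r _; rewrite opprB /f -addn1 PoszD addrA.
Qed.

Lemma bellI_ge_coincidence (k : nat) : (k < N)%N ->
  expect p x (fun a => (if (d%:Z %| (a (inord k) : nat)%:Z - (a ord_max : nat)%:Z)%Z
                        then d%:Z else 0) - 1)
  <= bellI p x.
Proof.
move=> kN; set xk := (x (inord k) : nat)%:Z.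
have xkE : xk = xk + 0 * M%:Z by rewrite mul0r addr0.
have xkME : xk + M%:Z = xk + 1 * M%:Z by rewrite mul1r.
case k_odd : (odd k).
- have sgkE : sgk k = -1 by rewrite /sgk -signr_odd k_odd.
  have := sum_link_steps_le_bell kN (fun c => - c) (xk + 1); rewrite sgkE.
  have -> : \sum_(r < M) (link k (fun c => - c) (xk + 1 + (r : nat)%:Z)
                          - link k (fun c => - c) (xk + 1 + (r : nat)%:Z + -1))
      = - \sum_(r < M) (link k (fun c => - c) (xk + (r : nat)%:Z)
                        - link k (fun c => - c) (xk + (r : nat)%:Z + 1)).
    by rewrite -sumrN; apply: eq_bigr => r _; rewrite opprB; congr (link _ _ _ - link _ _ _); ring.
  rewrite sum_link_telescope opprB xkME [in link _ _ xk]xkE.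
  rewrite !link_at -expectB; apply: le_trans; rewrite le_eqVlt; apply/orP; left; apply/eqP/eq_expect => a.
  rewrite /modd -signr_odd k_odd expr1 -[X in (d%:Z %| X)%Z]opprB rpredN.
  rewrite -modzB1_sub //; congr ((_ %% _)%Z - (_ %% _)%Z); ring.
- have sgkE : sgk k = 1 by rewrite /sgk -signr_odd k_odd.
  have := sum_link_steps_le_bell kN (fun c => c + 1) xk; rewrite sgkE.
  rewrite sum_link_telescope xkME [in link _ _ xk]xkE.
  rewrite !link_at -expectB; apply: le_trans; rewrite le_eqVlt; apply/orP; left; apply/eqP/eq_expect => a.
  rewrite /modd -signr_odd k_odd expr0 -modzB1_sub //.
  congr ((_ %% _)%Z - (_ %% _)%Z); ring.
Qed.

Lemma bexp_pair (i j : 'I_N.+1) (s1 s2 : int) : i != j ->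
  bexp p x [:: (i, nat_of_ord (x i), s1); (j, nat_of_ord (x j), s2)]
  = expect p x (fun a => modd (s1 * (a i : nat)%:Z + s2 * (a j : nat)%:Z)).
Proof.
move=> ij; have setd_x l : setd (x l) (x l) = x l.
  by apply: val_inj; rewrite /setd val_insubd ltn_pmod // modn_small.
rewrite bexpE.
have -> : tsetting x [:: (i, nat_of_ord (x i), s1); (j, nat_of_ord (x j), s2)] = x.
  apply/ffunP => l; rewrite ffunE /=.
  case: (eqVneq i l) => [<-|_]; first by rewrite eq_sym (negbTE ij) setd_x.
  by case: (eqVneq j l) => [<-|_]; rewrite ?setd_x.
apply: eq_expect => a; congr modd.
by rewrite /Defs.tval !big_cons big_nil addr0 !divn_small ?ltn_ord // !addn0.
Qed.

Lemma bexp_pair_sum (i j : 'I_N.+1) : i != j ->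
  bexp p x [:: (i, nat_of_ord (x i), 1); (j, nat_of_ord (x j), -1)]
  + bexp p x [:: (j, nat_of_ord (x j), 1); (i, nat_of_ord (x i), -1)]
  = expect p x (fun a => if (d%:Z %| (a i : nat)%:Z - (a j : nat)%:Z)%Z then 0 else d%:Z).
Proof.
move=> ij; have ji : j != i by rewrite eq_sym.
rewrite !bexp_pair // -expectD; apply: eq_expect => a.
rewrite /modd -modz_modzN // opprB; congr (_ + _); congr ((_ %% _)%Z); ring.
Qed.

End Bell.

Theorem theorem2 (R : realFieldType) (N M d : nat)
  (hN : (2 <= N)%N) (hM : (2 <= M)%N) (hd : (2 <= d)%N)
  (p : {ffun 'I_N.+1 -> 'I_M} -> {ffun 'I_N.+1 -> 'I_d} -> R) :
  is_behavior p -> nonsignalling p ->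
  forall (x : {ffun 'I_N.+1 -> 'I_M}) (k : 'I_N.+1), (k < N)%N ->
  (d.-1)%:R <=
    bellI p x
    + bexp p x [:: (k, nat_of_ord (x k), 1); (ord_max, nat_of_ord (x ord_max), -1)]
    + bexp p x [:: (ord_max, nat_of_ord (x ord_max), 1); (k, nat_of_ord (x k), -1)].
Proof.
move=> hb hns x k kN.
have k_neq_last : k != ord_max by apply: contraTneq kN => ->; rewrite ltnn.
rewrite -addrA bexp_pair_sum //.
have := bellI_ge_coincidence hN hM hd hb hns x kN; rewrite inord_val => bell_ge.
apply: le_trans (lerD bell_ge (lexx _)).
have -> : (d.-1)%:R = expect p x (fun=> (d.-1)%:Z) by rewrite (expect_cst hb).
rewrite -expectD; apply: (ler_expect hb) => a.
by case: ifP => _; lia.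
Qed.
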